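(* Assume $0<h<1$, $2/h\notin\mathbb Z$ and $\lim_{\beta\to\infty}|\Lambda_{L_\beta}|e^{-2\beta}=0$. Then there exists a finite constant $C_0$ such that $$\frac{\mu_\beta(\mathscr V_{\mathbf{-1}}\setminus\{\mathbf{-1}\})}{\mu_\beta(\mathbf{-1})}\le C_0\,|\Lambda_L|\,e^{-2\beta}\quad\text{for all }\beta\ge C_0.$$ In particular this ratio tends to $0$ as $\beta\to\infty$.
   Context: Blume–Capel model. Fix $h\in(0,2)$, $n_0=\lfloor 2/h\rfloor$. For each $\beta>0$, $L=L_\beta$ is a positive integer (with $L_\beta\ge n_0(n_0+1)+2$), $\Lambda_L$ the two-dimensional discrete torus of side $L$, $\Omega_L=\{-1,0,1\}^{\Lambda_L}$. Hamiltonian $\mathbb H(\sigma)=\sum(\sigma(y)-\sigma(x))^2-h\sum_x\sigma(x)$, first sum over unordered nearest-neighbour pairs. $\mu_\beta(\sigma)=Z_\beta^{-1}e^{-\beta\mathbb H(\sigma)}$. $\sigma^{x,\pm}$: replace $\sigma(x)$ by $\sigma(x)\pm1$ modulo $3$ in $\{-1,0,1\}$. $\mathbf{-1}$ is the all-$(-1)$ configuration. $N(\sigma)=\#\{x:\sigma(x)\ne-1\}$. $\mathfrak R$ is the set of configurations equal to $0$ on a rectangle of sites with side lengths $n_0$ and $n_0+1$ (either orientation) and $-1$ elsewhere. The valley of $\mathbf{-1}$ is $\mathscr V_{\mathbf{-1}}=\{\sigma:N(\sigma)\le n_0(n_0+1)\}\cup\{\sigma^{x,\pm}:\sigma\in\mathfrak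 R,x\in\Lambda_L\}$. *)

From Stdlib Require Import Reals.
From mathcomp Require Import all_boot.
Set Implicit Arguments. Unset Strict Implicit. Unset Printing Implicit Defensive.

(* Spins: s : 'I_3 encodes the spin value (s - 1) in {-1, 0, 1}. *)
Notation spin := 'I_3.
Definition spin_val (s : spin) : R := Rminus (INR (nat_of_ord s)) 1.
Definition spin_m1 : spin := @Ordinal 3 0 isT.
Definition spin_0  : spin := @Ordinal 3 1 isT.

Notation site L := ('I_L * 'I_L)%type.
Notation config L := {ffun site L -> spin}.

Definition right_nb L (x : site L) : site L := (ordS x.1, x.2).
Definition up_nb L (x : site L) : site L := (x.1, ordS x.2).

Definition Rsum (I : finType) (P : pred I) (F : I -> R) : R :=
  \big[Rplus/R0]_(i : I | P i) F i.

(* Hamiltonian: sum over unordered nearest-neighbour pairs {x, x+e1}, {x, x+e2}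
   (each counted once when L >= 3) minus h * sum of spins. *)
Definition Ham (h : R) L (s : config L) : R :=
  Rminus
    (Rsum (I := site L) xpredT
      (fun x => Rplus (pow (Rminus (spin_val (s (right_nb x))) (spin_val (s x))) 2)
                      (pow (Rminus (spin_val (s (up_nb x))) (spin_val (s x))) 2)))
    (Rmult h (Rsum (I := site L) xpredT (fun x => spin_val (s x)))).

Definition Zpart (h beta : R) L : R :=
  Rsum (I := config L) xpredT (fun s => exp (Ropp (Rmult beta (Ham h s)))).

Definition mu (h beta : R) L (A : pred (config L)) : R :=
  Rdiv (Rsum (I := config L) A (fun s => exp (Ropp (Rmult beta (Ham h s))))) (Zpart h beta L).

Definition minus1 L : config L := [ffun _ => spin_m1].

(* sigma^{x,+} and sigma^{x,-}: spin at x shifted by +1 / -1 modulo 3. *)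
Definition flip_plus L (s : config L) (x : site L) : config L :=
  [ffun y => if y == x then ordS (s x) else s y].
Definition flip_minus L (s : config L) (x : site L) : config L :=
  [ffun y => if y == x then ord_pred (s x) else s y].

Definition Nnot L (s : config L) : nat := #|[set x | s x != spin_m1]|.

Definition n0 (h : R) : nat := Z.to_nat (Int_part (Rdiv 2 h)).

(* Site x lies in the torus rectangle with lower-left corner (a,b),
   horizontal side w and vertical side v:
   x = ((a + i) mod L, (b + j) mod L) with i < w, j < v. *)
Definition in_rect L (a b : 'I_L) (w v : nat) (x : site L) : bool :=
  (((x.1 + L - a) %% L < w) && ((x.2 + L - b) %% L < v))%N.

Definition in_Rset (h : R) L (s : config L) : bool :=
  [exists a : 'I_L, exists b : 'I_L,
     (s == [ffun x => if in_rect a b (n0 h) (n0 h).+1 x then spin_0 else spin_m1])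
  || (s == [ffun x => if in_rect a b (n0 h).+1 (n0 h) x then spin_0 else spin_m1])].

Definition valley (h : R) L (s : config L) : bool :=
  (Nnot s <= n0 h * (n0 h).+1)%N
  || [exists t : config L, exists x : site L,
        in_Rset h t && ((s == flip_plus t x) || (s == flip_minus t x))].

From Stdlib Require Import Reals Lra ZArith.
From mathcomp Require Import all_boot zify Rstruct.
Set Implicit Arguments. Unset Strict Implicit. Unset Printing Implicit Defensive.

(* The ratio is the sum, over sigma in the valley other than -1, of
   exp (-beta (H sigma - H(-1))).  Such a sigma has a nonempty set S of
   non-minus sites with |S| <= M = n0^2 + n0 + 1 < L, and H sigma - H(-1) is at
   least the droplet energy F(S) = perimeter(S) - h |S|.  Splitting S along
   empty rows and columns until both projections are cyclic intervals of
   lengths p, q, and using perimeter >= 2(p + q), |S| <= p q and h n0 <= 2,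
   gives F(S) >= g(S), the number of maximal runs of the two projections
   of S.  A set S is determined by its projections up to 2^(M^2) choices,
   and a projection by its run starts up to 2^M choices, so the ratio is at
   most a constant times (sum_(k >= 1) (2^M L e^-beta)^k)^2 = O(L^2 e^-2beta)
   once L e^-beta is small. *)

(** * Runs on the discrete circle *)

Lemma iter_inj T (f : T -> T) n : injective f -> injective (iter n f).
Proof. by move=> fi; elim: n => [|n IH] x y //= /fi; apply: IH. Qed.

Section CyclicRuns.
Variable L : nat.
Implicit Types (A : {set 'I_L}) (i x y : 'I_L).

Lemma iter_ordS_val i d : val (iter d (@ordS L) i) = (i + d) %% L.
Proof.
elim: d => [|d IH] /=; first by rewrite addn0 modn_small.
by rewrite IH /= addnS -addn1 modnDml addn1.
Qed.

Lemma iter_ordS_period i : iter L (@ordS L) i = i.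
Proof. by apply: val_inj; rewrite iter_ordS_val modnDr modn_small. Qed.

Lemma iter_ordS_dist x y : iter ((y + L - x) %% L) (@ordS L) x = y.
Proof.
apply: val_inj; rewrite iter_ordS_val modnDmr.
have hx := ltn_ord x.
rewrite addnBA; last by lia.
by rewrite (addnC x) addnK modnDr modn_small.
Qed.

Lemma iter_ordS_ord_pred x e : iter e (@ordS L) (iter e (@ord_pred L) x) = x.
Proof. by elim: e => [|e IH] //; rewrite iterSr [iter e.+1 _ x]iterS ord_predK. Qed.

Lemma ordS_closed_full A x :
  x \in A -> (forall i, i \in A -> ordS i \in A) -> forall y, y \in A.
Proof.
move=> xA cl y; rewrite -(iter_ordS_dist x y).
by elim: (_ %% L) => [|d IH] //=; apply: cl.
Qed.

Definition run_starts A : {set 'I_L} := [set i in A | ord_pred i \notin A].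

Lemma run_starts_setU A B :
  #|run_starts (A :|: B)| <= #|run_starts A| + #|run_starts B|.
Proof.
apply: leq_trans (leq_card_setU _ _).
apply: subset_leq_card; apply/subsetP => i; rewrite !inE.
case/andP; rewrite negb_or => /orP [] iA /andP [h1 h2].
  by rewrite iA h1.
by rewrite iA h2 orbT.
Qed.

Definition run A i0 : {set 'I_L} :=
  [set i | [exists d : 'I_L, (i == iter d (@ordS L) i0) &&
            [forall e : 'I_L, (e <= d) ==> (iter e (@ordS L) i0 \in A)]]].

Lemma run_start A i0 : i0 \in A -> i0 \in run A i0.
Proof.
move=> iA; rewrite inE; apply/existsP.
have L0 : 0 < L by apply: leq_ltn_trans (ltn_ord i0).
exists (Ordinal L0); rewrite eqxx /=; apply/forallP => e; apply/implyP.
by rewrite leqn0 => /eqP ->.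
Qed.

Lemma run_succ A i0 i :
  i0 \in A -> i \in run A i0 -> ordS i \in A -> ordS i \in run A i0.
Proof.
move=> i0A; rewrite inE => /existsP [d /andP [/eqP ei /forallP H]] sA.
case: (ltnP d.+1 L) => hd.
  rewrite inE; apply/existsP; exists (Ordinal hd); rewrite /= ei eqxx /=.
  apply/forallP => e; apply/implyP; rewrite leq_eqVlt ltnS => /orP [/eqP ee|le].
    by rewrite ee /= -ei.
  by have := H e; rewrite le.
have dL : d.+1 = L by apply/eqP; rewrite eqn_leq hd ltn_ord.
have -> : ordS i = i0 by rewrite ei -[ordS _]/(iter d.+1 _ _) dL iter_ordS_period.
exact: run_start.
Qed.

Lemma run_pred A i0 i :
  i0 \in run_starts A -> ordS i \in run A i0 -> i \in A -> i \in run A i0.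
Proof.
rewrite inE => /andP [i0A i0s].
rewrite inE => /existsP [d /andP [/eqP ei /forallP H]] iA.
case: d ei H => [[|d] hd] /= ei H.
  by move: i0s; rewrite -ei ordSK iA.
have hd' : d < L by apply: ltnW.
rewrite inE; apply/existsP; exists (Ordinal hd'); rewrite /=.
move/ordS_inj: ei => ->; rewrite eqxx /=.
apply/forallP => e; apply/implyP => le.
by have := H e; rewrite (leq_trans le (leqnSn _)).
Qed.

Lemma run_other A i0 i1 :
  i1 \in run_starts A -> i0 != i1 -> i1 \notin run A i0.
Proof.
move=> /[!inE] /andP [i1A i1s] ne.
apply/negP => /existsP [[[|d] hd] /andP [/eqP ei /forallP H]].
  by move: ne; rewrite ei eqxx.
have hd' : d < L by apply: ltnW.
have := H (Ordinal hd'); rewrite /= leqnSn /=.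
by move: i1s; rewrite ei /= ordSK => /negbTE ->.
Qed.

Lemma exists_run_start A x : x \in A -> #|A| < L ->
  exists i d, [/\ i \in run_starts A, d < #|A| & iter d (@ordS L) i = x].
Proof.
move=> xA AL.
have [z zA] : exists z, z \notin A.
  case: (boolP [exists z, z \notin A]) => [/existsP //|/existsPn H].
  have : A = setT by apply/setP => i; rewrite in_setT; exact: negbNE (H i).
  by move=> eA; move: AL; rewrite eA cardsT card_ord ltnn.
pose y e := iter e (@ord_pred L) x.
have yS e : iter e (@ordS L) (y e) = x by apply: iter_ordS_ord_pred.
set e0 := (x + L - z) %% L.
have e0L : e0 < L by apply: ltn_pmod; apply: leq_ltn_trans (ltn_ord x).
have ye0 : y e0 = z.
  by have := yS e0; rewrite -{1}(iter_ordS_dist z x) -/e0; apply: (iter_inj (@ordS_inj L)).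
have e0pos : 0 < e0.
  by rewrite lt0n; apply/negP => /eqP e00; move: zA; rewrite -ye0 e00 /= xA.
have exP : exists e, y e.+1 \notin A by exists e0.-1; rewrite prednK // ye0.
case: (ex_minnP exP) => es yes esmin.
have esL : es < L.
  apply: leq_ltn_trans e0L; apply: leq_trans (esmin e0.-1 _) (leq_pred _).
  by rewrite prednK // ye0.
have inA e : e <= es -> y e \in A.
  case: e => [|e] le //; apply/negPn/negP => ne.
  by have := esmin e ne; rewrite leqNgt le.
exists (y es), es; split; last exact: yS.
- by rewrite inE (inA es (leqnn _)) /=; exact: yes.
- have inj : injective (fun e : 'I_es.+1 => y e).
    move=> [e1 h1] [e2 h2] /= eq; apply: val_inj => /=.
    have := yS e1; rewrite eq -{1}(yS e2) => /(congr1 val).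
    rewrite !iter_ordS_val => /eqP; rewrite eqn_modDl.
    by rewrite !modn_small ?(leq_ltn_trans _ esL) // => /eqP.
  have := card_imset (mem 'I_es.+1) inj; rewrite card_ord => <-.
  apply: subset_leq_card; apply/subsetP => w /imsetP [e _ ->]; apply: inA.
  by rewrite -ltnS.
Qed.

Lemma cyclic_boundary_ge2 A x y : x \in A -> y \notin A ->
  2 <= \sum_(i : 'I_L) ((i \in A) != (ordS i \in A)).
Proof.
move=> xA yA.
case: (boolP [exists i, (i \in A) && (ordS i \notin A)]); last first.
  move/existsPn => H; move/negP: yA; elim; apply: (ordS_closed_full xA) => i iA.
  by have := H i; rewrite iA /= negbK.
move/existsP => [i /andP [iA iS]].
case: (boolP [exists j, (j \notin A) && (ordS j \in A)]); last first.
  move/existsPn => H.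
  have cl : forall z, z \in ~: A.
    apply: (ordS_closed_full (x := y)); first by rewrite inE.
    move=> j; rewrite !inE => jA; have := H j; rewrite jA /=; by case: (ordS j \in A).
  by have := cl i; rewrite inE iA.
move/existsP => [j /andP [jA jS]].
have ij : j != i by apply: contraNneq jA => ->.
rewrite (bigD1 i) //= (bigD1 j) //= iA (negbTE iS) (negbTE jA) jS /=.
by rewrite addnA leq_addr.
Qed.

End CyclicRuns.

(** * Sets of sites: projections, perimeter and splittings *)

Section SiteSets.
Variable L : nat.
Implicit Types S : {set site L}.

Definition proj1S S : {set 'I_L} := [set x.1 | x in S].
Definition proj2S S : {set 'I_L} := [set x.2 | x in S].

Lemma mem_proj1S S x : x \in S -> x.1 \in proj1S S.
Proof. by move=> xS; apply/imsetP; exists x. Qed.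

Lemma mem_proj2S S x : x \in S -> x.2 \in proj2S S.
Proof. by move=> xS; apply/imsetP; exists x. Qed.

Lemma sub_proj S : S \subset setX (proj1S S) (proj2S S).
Proof. by apply/subsetP => x xS; rewrite inE (mem_proj1S xS) (mem_proj2S xS). Qed.

Lemma card_le_proj S : #|S| <= #|proj1S S| * #|proj2S S|.
Proof. by rewrite -cardsX; apply: subset_leq_card; apply: sub_proj. Qed.

Definition nruns S : nat := #|run_starts (proj1S S)| + #|run_starts (proj2S S)|.

Definition perimeter S : nat :=
  \sum_(x : site L) (((x \in S) != (right_nb x \in S)) + ((x \in S) != (up_nb x \in S))).

Definition hperimeter S : nat := \sum_(x : site L) ((x \in S) != (right_nb x \in S)).

Definition unbonded S1 S2 :=
  forall x, (x \in S1 -> (right_nb x \notin S2) && (up_nb x \notin S2)) /\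
            (x \in S2 -> (right_nb x \notin S1) && (up_nb x \notin S1)).

Definition splits S S1 S2 :=
  [/\ S = S1 :|: S2, (forall x, x \in S1 -> x \notin S2), unbonded S1 S2,
      S1 != set0 & S2 != set0].

Lemma perimeter_split S S1 S2 : splits S S1 S2 -> perimeter S = perimeter S1 + perimeter S2.
Proof.
case=> -> dis nb _ _; rewrite /perimeter -big_split /=; apply: eq_bigr => x _.
have [n1 n2] := nb x.
have d1 := dis x; have d2 := dis (right_nb x); have d3 := dis (up_nb x).
rewrite !inE; move: n1 n2 d1 d2 d3.
case: (x \in S1); case: (x \in S2); case: (right_nb x \in S1); case: (right_nb x \in S2);
case: (up_nb x \in S1); case: (up_nb x \in S2) => //= n1 n2 d1 d2 d3;
  (try by have := n1 isT); (try by have := n2 isT); (try by have := d1 isT);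
  (try by have := d2 isT); (try by have := d3 isT).
Qed.

Lemma card_split S S1 S2 : splits S S1 S2 ->
  [/\ #|S| = #|S1| + #|S2|, #|S1| < #|S| & #|S2| < #|S|].
Proof.
case=> -> d _ n1 n2.
have -> : #|S1 :|: S2| = #|S1| + #|S2|.
  rewrite cardsU; have -> : S1 :&: S2 = set0.
    by apply/setP => x; rewrite !inE; case: (boolP (x \in S1)) => // /d /negbTE ->.
  by rewrite cards0 subn0.
split => //; first by rewrite -{1}(addn0 #|S1|) ltn_add2l card_gt0.
by rewrite -{1}(add0n #|S2|) ltn_add2r card_gt0.
Qed.

Lemma nruns_split S S1 S2 : splits S S1 S2 -> nruns S <= nruns S1 + nruns S2.
Proof.
case=> -> _ _ _ _; rewrite /nruns.
have -> : proj1S (S1 :|: S2) = proj1S S1 :|: proj1S S2 by apply: imsetU.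
have -> : proj2S (S1 :|: S2) = proj2S S1 :|: proj2S S2 by apply: imsetU.
have := run_starts_setU (proj1S S1) (proj1S S2).
have := run_starts_setU (proj2S S1) (proj2S S2).
lia.
Qed.

(* The run of the first projection from one run start misses another run start,
   so the columns of that run cut S into two unbonded parts. *)
Lemma split_of_run_starts1 S : 1 < #|run_starts (proj1S S)| ->
  exists S1 S2, splits S S1 S2.
Proof.
case/card_gt1P => i0 [i1 [h0 h1 ne]].
set A := proj1S S.
have i0A : i0 \in A by move: h0; rewrite inE => /andP [].
have r0 : i0 \in run A i0 := run_start i0A.
have rS i : i \in run A i0 -> ordS i \in A -> ordS i \in run A i0 := run_succ i0A.
have rP i : ordS i \in run A i0 -> i \in A -> i \in run A i0 := run_pred h0.
have r1 : i1 \notin run A i0 := run_other h1 ne.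
move: (run A i0) r0 rS rP r1 => R r0 rS rP r1.
exists [set x in S | x.1 \in R], [set x in S | x.1 \notin R]; split.
- by apply/setP => x; rewrite !inE -andb_orr orbN andbT.
- by move=> x; rewrite !inE => /andP [_ ->]; rewrite andbF.
- move=> x; split; rewrite !inE.
    move=> /andP [xS xr]; rewrite /right_nb /up_nb /= xr andbF andbT.
    apply/negP => /andP [rS' rn]; move/negP: rn; apply.
    by apply: rS => //; apply: (mem_proj1S rS').
  move=> /andP [xS xr]; rewrite /right_nb /up_nb /= (negbTE xr) andbF andbT.
  apply/negP => /andP [rS' rn]; move/negP: xr; apply.
  by apply: rP => //; apply: (mem_proj1S xS).
- move: i0A => /imsetP [x xS ex]; apply/set0Pn; exists x.
  by rewrite inE xS -ex r0.
- move: h1; rewrite inE => /andP [/imsetP [x xS ex] _]; apply/set0Pn; exists x.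
  by rewrite inE xS -ex r1.
Qed.

Definition swap_site (x : site L) : site L := (x.2, x.1).

Lemma swap_siteK : involutive swap_site. Proof. by case. Qed.

Definition transposeS S : {set site L} := [set x | swap_site x \in S].

Lemma transposeSK S : transposeS (transposeS S) = S.
Proof. by apply/setP => x; rewrite !inE swap_siteK. Qed.

Lemma card_transposeS S : #|transposeS S| = #|S|.
Proof.
have -> : transposeS S = swap_site @^-1: S by apply/setP => x; rewrite !inE.
by apply: card_preimset; apply: (can_inj swap_siteK).
Qed.

Lemma proj1S_transposeS S : proj1S (transposeS S) = proj2S S.
Proof.
apply/setP => i; apply/imsetP/imsetP => [[x]|[x]].
  by rewrite inE => xS ->; exists (swap_site x).
by move=> xS ->; exists (swap_site x); rewrite // inE swap_siteK.
Qed.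

Lemma proj2S_transposeS S : proj2S (transposeS S) = proj1S S.
Proof. by rewrite -[in RHS](transposeSK S) proj1S_transposeS. Qed.

Lemma split_of_run_starts2 S : 1 < #|run_starts (proj2S S)| ->
  exists S1 S2, splits S S1 S2.
Proof.
rewrite -proj1S_transposeS => /split_of_run_starts1 [T1 [T2 [e d nb n1 n2]]].
exists (transposeS T1), (transposeS T2); split.
- by rewrite -[LHS]transposeSK e; apply/setP => x; rewrite !inE.
- by move=> x; rewrite !inE; apply: d.
- case=> a b; have [a1 a2] := nb (b, a); rewrite !inE; split.
    by move=> /a1; rewrite /swap_site /right_nb /up_nb /= => /andP [-> ->].
  by move=> /a2; rewrite /swap_site /right_nb /up_nb /= => /andP [-> ->].
- apply: contra n1 => /eqP e1; rewrite -(transposeSK T1) e1.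
  by apply/eqP/setP => x; rewrite !inE.
- apply: contra n2 => /eqP e1; rewrite -(transposeSK T2) e1.
  by apply/eqP/setP => x; rewrite !inE.
Qed.

Lemma perimeter_hv S : perimeter S = hperimeter S + hperimeter (transposeS S).
Proof.
rewrite /perimeter /hperimeter big_split /=; congr (_ + _).
rewrite (reindex_inj (can_inj swap_siteK)) /=.
by apply: eq_bigr => -[a b] _; rewrite !inE.
Qed.

(* Each row met by S, not being full, contributes two horizontal boundary bonds. *)
Lemma hperimeter_ge S : #|S| < L -> 2 * #|proj2S S| <= hperimeter S.
Proof.
move=> SL.
rewrite /hperimeter (eq_bigr (fun x : site L =>
  nat_of_bool (((x.1, x.2) \in S) != (right_nb (x.1, x.2) \in S)))); last by case.
rewrite -(pair_bigA _ (fun i j => nat_of_bool (((i, j) \in S) != (right_nb (i, j) \in S)))) /=.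
rewrite exchange_big /= mulnC -sum_nat_const big_mkcond /=; apply: leq_sum => j _.
case: ifP => // /imsetP [[a b] xS /= ej].
set A := [set i | (i, j) \in S].
have [y yA] : exists y, y \notin A.
  case: (boolP [exists y, y \notin A]) => [/existsP //|/existsPn H].
  have : #|A| <= #|S|.
    have -> : A = (fun x : site L => x.1) @: [set x in S | x.2 == j].
      apply/setP => i; rewrite inE; apply/idP/imsetP => [iS|[x]].
        by exists (i, j); rewrite // inE iS eqxx.
      by rewrite inE => /andP [yS /eqP <-] ->; case: x yS.
    apply: leq_trans (leq_imset_card _ _) _; apply: subset_leq_card.
    by apply/subsetP => x; rewrite inE => /andP [].
  have -> : #|A| = L.
    have -> : A = setT by apply/setP => i; rewrite in_setT; exact: negbNE (H i).
    by rewrite cardsT card_ord.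
  by move=> H2; move: SL; rewrite ltnNge H2.
have aA : a \in A by rewrite inE ej.
apply: leq_trans (cyclic_boundary_ge2 aA yA) _; apply: eq_leq; apply: eq_bigr => i _.
by rewrite !inE.
Qed.

Lemma perimeter_ge_proj S : #|S| < L -> 2 * (#|proj1S S| + #|proj2S S|) <= perimeter S.
Proof.
move=> SL; rewrite perimeter_hv mulnDr addnC; apply: leq_add; first exact: hperimeter_ge.
by rewrite -proj2S_transposeS; apply: hperimeter_ge; rewrite card_transposeS.
Qed.

End SiteSets.

(* AM-GM turns k <= p q into 4 k <= (p + q)^2. *)
Lemma card_le_semiperimeter m p q k :
  1 <= m -> 2 <= p + q -> k <= p * q -> k <= m * m + m + 1 -> k <= m * (p + q - 1).
Proof.
move=> m1 pq2 kpq km.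
have amgm : 4 * k <= (p + q) * (p + q).
  have : 0 <= (p - q) * (p - q) + (q - p) * (q - p) by [].
  nia.
nia.
Qed.

(** * Droplet energy *)

Local Open Scope R_scope.

Definition droplet_energy (h : R) L (S : {set site L}) : R :=
  INR (perimeter S) - h * INR #|S|.

Section DropletEnergy.
Variables (h : R) (m L : nat).
Hypotheses (h_pos : 0 < h) (h_m : h * INR m <= 2) (m_pos : (1 <= m)%N).
Implicit Types S : {set site L}.

Lemma droplet_energy_split S S1 S2 : splits S S1 S2 ->
  droplet_energy h S = droplet_energy h S1 + droplet_energy h S2.
Proof.
move=> sp; have [e _ _] := card_split sp.
rewrite /droplet_energy e (perimeter_split sp) !plus_INR; ring.
Qed.

Lemma droplet_energy_ge2 S :
  (#|S| <= m * m + m + 1)%N -> (#|S| < L)%N -> S != set0 -> 2 <= droplet_energy h S.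
Proof.
move=> SM SL /set0Pn [x xS].
set p := #|proj1S S|; set q := #|proj2S S|.
have p1 : (1 <= p)%N by rewrite card_gt0; apply/set0Pn; exists x.1; apply: mem_proj1S.
have q1 : (1 <= q)%N by rewrite card_gt0; apply/set0Pn; exists x.2; apply: mem_proj2S.
have per : 2 * INR (p + q) <= INR (perimeter S).
  by rewrite -[2]/(INR 2) -mult_INR; apply: le_INR; apply/leP; apply: perimeter_ge_proj.
have card : INR #|S| <= INR m * (INR (p + q) - 1).
  have pq2 : (2 <= p + q)%N by lia.
  have := card_le_semiperimeter m_pos pq2 (card_le_proj S) SM.
  rewrite -INR_1 -minus_INR; last by apply/leP; lia.
  by rewrite -mult_INR => /leP /le_INR.
have pq1 : 1 <= INR (p + q) by rewrite -INR_1; apply: le_INR; apply/leP; lia.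
rewrite /droplet_energy.
have : h * INR #|S| <= h * INR m * (INR (p + q) - 1).
  by rewrite Rmult_assoc; apply: Rmult_le_compat_l => //; lra.
have : h * INR m * (INR (p + q) - 1) <= 2 * (INR (p + q) - 1).
  by apply: Rmult_le_compat_r => //; lra.
lra.
Qed.

(* Isoperimetric inequality: by strong induction on |S|, splitting S while one
   of its projections has two runs, down to droplet_energy_ge2. *)
Lemma droplet_energy_ge_nruns S :
  (#|S| <= m * m + m + 1)%N -> (#|S| < L)%N -> INR (nruns S) <= droplet_energy h S.
Proof.
have [n] := ubnP #|S|; elim: n S => // n IH S Sn SM SL.
have [->|Sne] := eqVneq S set0.
  rewrite /nruns /proj1S /proj2S !imset0.
  have -> : run_starts (set0 : {set 'I_L}) = set0 by apply/setP => i; rewrite !inE.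
  rewrite cards0 /droplet_energy cards0 /= Rmult_0_r Rminus_0_r; exact: pos_INR.
have by_split S1 S2 : splits S S1 S2 -> INR (nruns S) <= droplet_energy h S.
  move=> sp; have [_ l1 l2] := card_split sp.
  rewrite (droplet_energy_split sp).
  have i1 := IH S1 (leq_trans l1 Sn) (leq_trans (ltnW l1) SM) (leq_ltn_trans (ltnW l1) SL).
  have i2 := IH S2 (leq_trans l2 Sn) (leq_trans (ltnW l2) SM) (leq_ltn_trans (ltnW l2) SL).
  apply: Rle_trans (Rplus_le_compat _ _ _ _ i1 i2).
  by rewrite -plus_INR; apply: le_INR; apply/leP; apply: nruns_split.
case: (ltnP 1 #|run_starts (proj1S S)|) => [/split_of_run_starts1 [S1 [S2]]|a1].
  exact: by_split.
case: (ltnP 1 #|run_starts (proj2S S)|) => [/split_of_run_starts2 [S1 [S2]]|a2].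
  exact: by_split.
apply: Rle_trans (droplet_energy_ge2 SM SL Sne).
by rewrite -[2]/(INR 2); apply: le_INR; apply/leP; rewrite /nruns; lia.
Qed.

End DropletEnergy.

Section RealSums.
Variable I : finType.
Implicit Types (P Q : pred I) (F G : I -> R).

Lemma Rsum_le P F G : (forall i, P i -> F i <= G i) -> Rsum P F <= Rsum P G.
Proof.
move=> H; apply: (big_ind2 (fun a b => a <= b)) => //; first exact: Rle_refl.
by move=> *; apply: Rplus_le_compat.
Qed.

Lemma Rsum_ge0 P F : (forall i, P i -> 0 <= F i) -> 0 <= Rsum P F.
Proof.
move=> H; apply: (big_ind (fun a => 0 <= a)) => //; first exact: Rle_refl.
by move=> *; apply: Rplus_le_le_0_compat.
Qed.

Lemma Rsum_subpred P Q F :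
  (forall i, P i -> Q i) -> (forall i, 0 <= F i) -> Rsum P F <= Rsum Q F.
Proof.
move=> PQ F0; rewrite /Rsum [X in X <= _]big_mkcond [X in _ <= X]big_mkcond.
apply: (big_ind2 (fun a b => a <= b)); first exact: Rle_refl.
  by move=> *; apply: Rplus_le_compat.
move=> i _; case Pi: (P i); first by rewrite (PQ i Pi); apply: Rle_refl.
by case: (Q i); [exact: F0 | exact: Rle_refl].
Qed.

Lemma INR_sum P (F : I -> nat) :
  INR (\sum_(i | P i) F i) = Rsum P (fun i => INR (F i)).
Proof. exact: (big_morph INR plus_INR). Qed.

Lemma Rsum_const_le P (c : R) (K : nat) :
  0 <= c -> (#|[set i | P i]| <= K)%N -> Rsum P (fun _ => c) <= INR K * c.
Proof.
move=> c0 hK.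
have -> : Rsum P (fun _ => c) = INR #|[set i | P i]| * c.
  rewrite -sum1_card INR_sum /Rsum big_distrl /=.
  by apply: eq_big => [i|i _]; rewrite ?inE //= Rmult_1_l.
by apply: Rmult_le_compat_r => //; apply: le_INR; apply/leP.
Qed.

End RealSums.

(** * Hamiltonian excess over the all-minus configuration *)

Lemma sum_mem_card (T : finType) (A : {set T}) : (\sum_(x : T) (x \in A : nat) = #|A|)%N.
Proof. by rewrite -sum1_card [RHS]big_mkcond; apply: eq_bigr => x _; case: (x \in A). Qed.

Section Excess.
Variable L : nat.
Implicit Types s : config L.

Definition nonminus_sites s : {set site L} := [set x | s x != spin_m1].
Definition plus_sites s : {set site L} := [set x | val (s x) == 2%N].

(* A bond costs at least one unit per level set {s <> -1}, {s = +1} it crosses. *)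
Lemma bond_energy_ge (a b : spin) :
  INR ((a != spin_m1) != (b != spin_m1)) + INR ((val a == 2%N) != (val b == 2%N))
  <= (spin_val b - spin_val a) ^ 2.
Proof.
by case: a => [[|[|[|?]]] ?] //; case: b => [[|[|[|?]]] ?] //; rewrite /spin_val /=; lra.
Qed.

Lemma Ham_excess_ge (h : R) s :
  droplet_energy h (nonminus_sites s) + droplet_energy h (plus_sites s)
  <= Ham h s - Ham h (minus1 L).
Proof.
rewrite /Ham /droplet_energy.
have bonds0 : Rsum xpredT (fun x : site L =>
   (spin_val (minus1 L (right_nb x)) - spin_val (minus1 L x)) ^ 2 +
   (spin_val (minus1 L (up_nb x)) - spin_val (minus1 L x)) ^ 2) = 0.
  by rewrite /Rsum big1 // => x _; rewrite !ffunE; ring.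
have field_diff :
    Rsum xpredT (fun x => spin_val (s x)) - Rsum xpredT (fun x => spin_val (minus1 L x))
    = INR #|nonminus_sites s| + INR #|plus_sites s|.
  rewrite -!sum_mem_card !INR_sum /Rsum -big_split /=.
  have -> : \big[Rplus/R0]_(x | xpredT x) spin_val (s x) =
            \big[Rplus/R0]_(x | xpredT x)
              ((INR (x \in nonminus_sites s) + INR (x \in plus_sites s)) + spin_val (minus1 L x)).
    apply: eq_bigr => x _; rewrite !inE ffunE.
    by case: (s x) => [[|[|[|?]]] ?] //; rewrite /spin_val /=; lra.
  by rewrite big_split /=; unfold Rminus; rewrite Rplus_assoc Rplus_opp_r Rplus_0_r.
have bonds : INR (perimeter (nonminus_sites s)) + INR (perimeter (plus_sites s))
    <= Rsum xpredT (fun x : site L =>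
         (spin_val (s (right_nb x)) - spin_val (s x)) ^ 2 +
         (spin_val (s (up_nb x)) - spin_val (s x)) ^ 2).
  rewrite /perimeter !INR_sum /Rsum -big_split; apply: Rsum_le => x _.
  have := bond_energy_ge (s x) (s (right_nb x)); have := bond_energy_ge (s x) (s (up_nb x)).
  by rewrite !plus_INR !inE /=; lra.
rewrite bonds0; move: field_diff bonds.
set Vs := Rsum xpredT _; set Vm := Rsum xpredT _; set T := Rsum xpredT _ => field_diff bonds.
have : h * Vs - h * Vm = h * (INR #|nonminus_sites s| + INR #|plus_sites s|).
  by rewrite -field_diff; ring.
lra.
Qed.

End Excess.

(** * Counting configurations and droplets *)

Lemma INR_expn m n : INR (m ^ n) = INR m ^ n.
Proof. by elim: n => [|n IH] //=; rewrite expnS mult_INR IH. Qed.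

Lemma config_of_sites_inj L (s t : config L) :
  nonminus_sites s = nonminus_sites t -> plus_sites s = plus_sites t -> s = t.
Proof.
move=> e1 e2; apply/ffunP => x.
have := congr1 (fun S : {set site L} => x \in S) e1.
have := congr1 (fun S : {set site L} => x \in S) e2.
rewrite /= !inE.
by case: (s x) => [[|[|[|?]]] ?] //; case: (t x) => [[|[|[|?]]] ?] //= *; apply: val_inj.
Qed.

Lemma card_configs_nonminus L (S : {set site L}) :
  (#|[set s : config L | nonminus_sites s == S]| <= 2 ^ #|S|)%N.
Proof.
rewrite -card_powerset.
have inj : {in [set s : config L | nonminus_sites s == S] &, injective (@plus_sites L)}.
  move=> s t; rewrite !inE => /eqP es /eqP et e2; apply: config_of_sites_inj => //.
  by rewrite es et.
rewrite -(card_in_imset inj); apply: subset_leq_card; apply/subsetP => A /imsetP [s].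
rewrite inE => /eqP <- ->; rewrite inE; apply/subsetP => x; rewrite !inE => /eqP e.
by apply/eqP => e'; move: e; rewrite e'.
Qed.

Definition small_set (T : finType) (M : nat) (A : {set T}) : bool :=
  (A != set0) && (#|A| <= M)%N.

Lemma sum_configs_by_nonminus L (M : nat) (F : {set site L} -> R) :
  (forall S, 0 <= F S) ->
  Rsum (fun s : config L => small_set M (nonminus_sites s)) (fun s => F (nonminus_sites s))
  <= INR (2 ^ M) * Rsum (small_set M) F.
Proof.
move=> F0; rewrite /Rsum (partition_big (@nonminus_sites L) (small_set M)) //=.
rewrite big_distrr /=; apply: Rsum_le => S /andP [_ SM].
rewrite (eq_bigr (fun _ => F S)); last by move=> s /andP [_ /eqP ->].
apply: Rsum_const_le => //.
apply: (@leq_trans (2 ^ #|S|)); last by rewrite leq_pexp2l.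
apply: leq_trans (card_configs_nonminus S).
by apply: subset_leq_card; apply/subsetP => s; rewrite !inE => /andP [_ ->].
Qed.

(* S is a subset of the product of its projections, so a pair of projections of
   size at most M carries at most 2^(M*M) sets S. *)
Lemma sum_sets_by_proj L (M : nat) (q : R) : 0 <= q ->
  Rsum (@small_set (site L) M) (fun S => q ^ nruns S)
  <= INR (2 ^ (M * M)) * (Rsum (@small_set 'I_L M) (fun A => q ^ #|run_starts A|) *
                         Rsum (@small_set 'I_L M) (fun A => q ^ #|run_starts A|)).
Proof.
move=> q0.
rewrite /Rsum (partition_big (fun S : {set site L} => (proj1S S, proj2S S))
   (fun p => small_set M p.1 && small_set M p.2)) /=; last first.
  move=> S /andP [/set0Pn [x xS] SM]; rewrite /small_set /=.
  rewrite (leq_trans (leq_imset_card _ _) SM) (leq_trans (leq_imset_card _ _) SM) !andbT.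
  by apply/andP; split; apply/set0Pn; [exists x.1; exact: mem_proj1S | exists x.2; exact: mem_proj2S].
rewrite big_distrlr pair_big /= big_distrr /=.
apply: Rsum_le => -[A B] /andP [/andP [_ AM] /andP [_ BM]] /=.
rewrite (eq_bigr (fun _ => q ^ #|run_starts A| * q ^ #|run_starts B|)); last first.
  by move=> S /andP [_ /eqP [<- <-]]; rewrite /nruns pow_add.
apply: Rsum_const_le; first by apply: Rmult_le_pos; apply: pow_le.
apply: (@leq_trans (2 ^ (#|A| * #|B|))); last by rewrite leq_pexp2l // leq_mul.
rewrite -cardsX -card_powerset; apply: subset_leq_card; apply/subsetP => S.
by rewrite !inE => /andP [_ /eqP [<- <-]]; apply: sub_proj.
Qed.

Definition run_cover L M (St : {set 'I_L}) : {set 'I_L} :=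
  (fun p : 'I_L * 'I_M => iter p.2 (@ordS L) p.1) @: setX St setT.

(* A subset of the circle of size at most M lies in the run cover of its run starts. *)
Lemma sum_line_sets_by_run_starts L (M : nat) (q : R) : 0 <= q -> (M < L)%N ->
  Rsum (@small_set 'I_L M) (fun A => q ^ #|run_starts A|)
  <= Rsum (fun St : {set 'I_L} => St != set0) (fun St => (INR (2 ^ M) * q) ^ #|St|).
Proof.
move=> q0 ML.
rewrite /Rsum (partition_big (@run_starts L) (fun St : {set 'I_L} => St != set0)) /=; last first.
  move=> A /andP [/set0Pn [x xA] AM].
  have [i [d [iS _ _]]] := exists_run_start xA (leq_ltn_trans AM ML).
  by apply/set0Pn; exists i.
apply: Rsum_le => St _.
rewrite (eq_bigr (fun _ => q ^ #|St|)); last by move=> A /andP [_ /eqP ->].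
rewrite Rpow_mult_distr -INR_expn -expnM.
apply: Rsum_const_le; first exact: pow_le.
apply: (@leq_trans (2 ^ #|run_cover M St|)); last first.
  rewrite leq_pexp2l // mulnC; apply: leq_trans (leq_imset_card _ _) _.
  by rewrite cardsX cardsT card_ord.
rewrite -card_powerset; apply: subset_leq_card; apply/subsetP => A.
rewrite !inE => /andP [/andP [_ AM] /eqP eS]; apply/subsetP => x xA.
have [i [d [iS dA ex]]] := exists_run_start xA (leq_ltn_trans AM ML).
have dM : (d < M)%N by apply: leq_trans dA AM.
apply/imsetP; exists (i, Ordinal dM) => //.
by rewrite inE /= -eS iS in_setT.
Qed.

Lemma bin_le_expn n k : ('C(n, k) <= n ^ k)%N.
Proof.
have ffact_le k' : (n ^_ k' <= n ^ k')%N.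
  by elim: k' => [|k' IH] //; rewrite ffactnSr expnSr leq_mul ?leq_subr.
by apply: leq_trans (ffact_le k); rewrite -bin_ffact leq_pmulr ?fact_gt0.
Qed.

Lemma geometric_sum_le (z : R) n : 0 <= z -> 2 * z <= 1 ->
  Rsum (fun k : 'I_n.+1 => (0 < k)%N) (fun k => z ^ k) <= 2 * z - 2 * z ^ n.+1.
Proof.
move=> z0 z1; elim: n => [|n IH].
  by rewrite /Rsum big_mkcond big_ord_recl big_ord0 /=; lra.
rewrite /Rsum big_mkcond big_ord_recr /= -big_mkcond /=.
have h1 : 2 * z ^ n.+2 <= z ^ n.+1.
  rewrite -(tech_pow_Rmult z n.+1); have := pow_le z n.+1 z0.
  by move: (z ^ n.+1) => w; nra.
have : 0 <= z ^ n.+1 by apply: pow_le.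
move: IH h1; rewrite /Rsum /=.
move: (\big[Rplus/R0]_(i < n.+1 | (0 < i)%N) z ^ i) => S.
by move: (z ^ n) => w; nra.
Qed.

Lemma sum_nonempty_sets_le L (y : R) : 0 <= y -> 2 * (INR L * y) <= 1 ->
  Rsum (fun St : {set 'I_L} => St != set0) (fun St => y ^ #|St|) <= 2 * (INR L * y).
Proof.
move=> y0 hy.
have cardL (St : {set 'I_L}) : (#|St| < L.+1)%N.
  by rewrite ltnS; apply: leq_trans (max_card _) _; rewrite card_ord.
rewrite /Rsum (partition_big (fun St : {set 'I_L} => (inord #|St| : 'I_L.+1))
                 (fun k : 'I_L.+1 => (0 < k)%N)) /=; last first.
  by move=> St St0; rewrite inordK // card_gt0.
apply: (@Rle_trans _ (Rsum (fun k : 'I_L.+1 => (0 < k)%N) (fun k => (INR L * y) ^ k))).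
  apply: Rsum_le => k _.
  rewrite (eq_bigr (fun _ => y ^ k)); last by move=> St /andP [_ /eqP <-]; rewrite inordK.
  rewrite Rpow_mult_distr -INR_expn.
  apply: Rsum_const_le; first exact: pow_le.
  apply: leq_trans (bin_le_expn L k).
  apply: (@leq_trans #|[set St : {set 'I_L} | #|St| == k]|); last by rewrite card_draws card_ord.
  apply: subset_leq_card; apply/subsetP => St.
  by rewrite !inE => /andP [_ /eqP <-]; rewrite inordK.
have z0 : 0 <= INR L * y by apply: Rmult_le_pos => //; apply: pos_INR.
by have := geometric_sum_le L z0 hy; have := pow_le _ L.+1 z0; lra.
Qed.

Lemma exp_le x y : x <= y -> exp x <= exp y.
Proof. by case/Rle_lt_or_eq_dec => [/exp_increasing/Rlt_le //|->]; apply: Rle_refl. Qed.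

Lemma exp_pow x n : exp x ^ n = exp (INR n * x).
Proof.
elim: n => [|n IH]; first by rewrite /= Rmult_0_l exp_0.
by rewrite -tech_pow_Rmult IH -exp_plus S_INR; congr exp; ring.
Qed.

Section SmallConfigurations.
Variables (h beta : R) (m L : nat).
Hypotheses (h_pos : 0 < h) (h_m : h * INR m <= 2) (m_pos : (1 <= m)%N).
Hypothesis beta_pos : 0 < beta.
Let M := (m * m + m + 1)%N.
Hypothesis M_lt_L : (M < L)%N.

Lemma weight_le_nruns (s : config L) : (#|nonminus_sites s| <= M)%N ->
  exp (- (beta * (Ham h s - Ham h (minus1 L)))) <= exp (- beta) ^ nruns (nonminus_sites s).
Proof.
move=> SM.
have SL := leq_ltn_trans SM M_lt_L.
have S21 : (#|plus_sites s| <= #|nonminus_sites s|)%N.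
  by apply: subset_leq_card; apply/subsetP => x; rewrite !inE; case: (s x) => [[|[|[|?]]] ?].
have f1 := droplet_energy_ge_nruns h_pos h_m m_pos SM SL.
have f2 := droplet_energy_ge_nruns h_pos h_m m_pos (leq_trans S21 SM) (leq_ltn_trans S21 SL).
have g0 := pos_INR (nruns (plus_sites s)).
have dH := Ham_excess_ge h s.
rewrite exp_pow; apply: exp_le.
by move: (INR _) (INR _) f1 f2 g0 dH => a b f1 f2 g0 dH; nra.
Qed.

Lemma sum_small_configs_le (y := INR L * (INR (2 ^ M) * exp (- beta))) : 2 * y <= 1 ->
  Rsum (fun s : config L => small_set M (nonminus_sites s))
       (fun s => exp (- (beta * (Ham h s - Ham h (minus1 L)))))
  <= INR (2 ^ M) * (INR (2 ^ (M * M)) * ((2 * y) * (2 * y))).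
Proof.
move=> hy.
set q := exp (- beta).
have q0 : 0 <= q by apply: Rlt_le; apply: exp_pos.
have y0 : 0 <= INR (2 ^ M) * q by apply: Rmult_le_pos => //; apply: pos_INR.
apply: (@Rle_trans _ (Rsum (fun s : config L => small_set M (nonminus_sites s))
                           (fun s => q ^ nruns (nonminus_sites s)))).
  by apply: Rsum_le => s /andP [_ SM]; apply: weight_le_nruns.
apply: (Rle_trans _ _ _ (sum_configs_by_nonminus M (fun S => pow_le q (nruns S) q0))).
apply: Rmult_le_compat_l; first exact: pos_INR.
apply: (Rle_trans _ _ _ (sum_sets_by_proj L M q0)).
apply: Rmult_le_compat_l; first exact: pos_INR.
have line := Rle_trans _ _ _ (sum_line_sets_by_run_starts q0 M_lt_L) (sum_nonempty_sets_le y0 hy).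
have a0 : 0 <= Rsum (@small_set 'I_L M) (fun A => q ^ #|run_starts A|).
  by apply: Rsum_ge0 => A _; apply: pow_le.
by apply: Rmult_le_compat.
Qed.

End SmallConfigurations.

(** * The valley of the all-minus configuration *)

Lemma n0_pos (h : R) : 0 < h < 1 -> (1 <= n0 h)%N.
Proof.
move=> [h0 h1].
have r2 : 2 < 2 / h.
  by apply: (Rmult_lt_reg_r h) => //; rewrite /Rdiv Rmult_assoc Rinv_l; lra.
have [b1 b2] := base_Int_part (2 / h).
have z1 : (1 < Int_part (2 / h))%Z by apply: lt_IZR; lra.
by apply/leP; rewrite /n0; lia.
Qed.

Lemma h_n0_le2 (h : R) : 0 < h -> h * INR (n0 h) <= 2.
Proof.
move=> h0.
have [b1 b2] := base_Int_part (2 / h).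
have hr : 0 < 2 / h by apply: Rdiv_lt_0_compat; lra.
have Ip : (-1 < Int_part (2 / h))%Z by apply: lt_IZR; lra.
have -> : INR (n0 h) = IZR (Int_part (2 / h)) by rewrite /n0 INR_IZR_INZ Z2Nat.id //; lia.
apply: (Rle_trans _ (h * (2 / h))); first by apply: Rmult_le_compat_l; lra.
by rewrite /Rdiv -Rmult_assoc (Rmult_comm h 2) Rmult_assoc Rinv_r; lra.
Qed.

Lemma mu_ratio_minus1 (h beta : R) L (A : pred (config L)) :
  mu h beta A / mu h beta (pred1 (minus1 L))
  = Rsum A (fun s => exp (- (beta * (Ham h s - Ham h (minus1 L))))).
Proof.
rewrite /mu.
have w0 := exp_pos (- (beta * Ham h (minus1 L))).
have Z0 : 0 < Zpart h beta L.
  rewrite /Zpart /Rsum (bigD1 (minus1 L)) //=.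
  have := @Rsum_ge0 _ (fun s => xpredT s && (s != minus1 L)) (fun s => exp (- (beta * Ham h s)))
    (fun s _ => Rlt_le _ _ (exp_pos _)).
  by rewrite /Rsum; move: (\big[Rplus/R0]_(i | _) _) => r /=; lra.
have -> : Rsum (pred1 (minus1 L)) (fun s : config L => exp (- (beta * Ham h s)))
          = exp (- (beta * Ham h (minus1 L))) by rewrite /Rsum (big_pred1 (minus1 L)).
have -> a : a / Zpart h beta L / (exp (- (beta * Ham h (minus1 L))) / Zpart h beta L)
    = a * / exp (- (beta * Ham h (minus1 L))).
  by field; split; apply: Rgt_not_eq.
rewrite /Rsum big_distrl /=; apply: eq_bigr => s _.
by rewrite -exp_Ropp -exp_plus; congr exp; ring.
Qed.

Lemma card_rect_le L (a b : 'I_L) (w v : nat) :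
  (#|[set y : site L | in_rect a b w v y]| <= w * v)%N.
Proof.
have L0 : (0 < L)%N by apply: leq_ltn_trans (ltn_ord a).
pose f (p : 'I_w * 'I_v) : site L :=
  (Ordinal (ltn_pmod (a + p.1) L0), Ordinal (ltn_pmod (b + p.2) L0)).
apply: (@leq_trans #|f @: [set: 'I_w * 'I_v]|); last first.
  by apply: leq_trans (leq_imset_card _ _) _; rewrite cardsT card_prod !card_ord.
apply: subset_leq_card; apply/subsetP => y; rewrite inE /in_rect => /andP [h1 h2].
apply/imsetP; exists (Ordinal h1, Ordinal h2) => //.
have ha := ltn_ord a; have hb := ltn_ord b.
case: y h1 h2 => y1 y2 h1 h2; congr pair; apply: val_inj => /=; rewrite modnDmr.
  by rewrite (_ : (a + (y1 + L - a) = y1 + L)%N) ?modnDr ?modn_small //; lia.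
by rewrite (_ : (b + (y2 + L - b) = y2 + L)%N) ?modnDr ?modn_small //; lia.
Qed.

Lemma nonminus_rect L (a b : 'I_L) (w v : nat) :
  nonminus_sites [ffun x => if in_rect a b w v x then spin_0 else spin_m1]
  = [set y | in_rect a b w v y].
Proof. by apply/setP => y; rewrite !inE ffunE; case: (in_rect a b w v y). Qed.

Lemma valley_small (h : R) L (s : config L) : valley h s && (s != minus1 L) ->
  small_set (n0 h * n0 h + n0 h + 1) (nonminus_sites s).
Proof.
case/andP => vs ne; apply/andP; split.
  apply: contra ne => /eqP e; apply/eqP/ffunP => x; rewrite ffunE.
  have : x \notin nonminus_sites s by rewrite e inE.
  by rewrite inE negbK => /eqP.
case/orP: vs => [H | /existsP [t /existsP [x /andP [Rt fl]]]].
  by apply: leq_trans H _; lia.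
have sub : nonminus_sites s \subset x |: nonminus_sites t.
  apply/subsetP => y; rewrite !inE; case: (eqVneq y x) => [->|ne'] //=.
  by case/orP: fl => /eqP ->; rewrite ffunE (negbTE ne').
have ct : (#|nonminus_sites t| <= n0 h * (n0 h).+1)%N.
  case/existsP: Rt => a /existsP [b /orP [/eqP -> | /eqP ->]]; rewrite nonminus_rect.
    exact: card_rect_le.
  by rewrite mulnC; apply: card_rect_le.
apply: leq_trans (subset_leq_card sub) _; rewrite cardsU1.
have : ((x \notin nonminus_sites t) <= 1)%N by case: (x \notin _).
lia.
Qed.

Lemma valley_ratio_le (h beta : R) L :
  0 < h < 1 -> 0 < beta -> (n0 h * (n0 h).+1 + 2 <= L)%N ->
  let M := (n0 h * n0 h + n0 h + 1)%N in
  let P := INR (2 ^ M) in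
  let X := INR (L * L) * exp (-2 * beta) in
  4 * (P * P) * X <= 1 ->
  mu h beta (fun s : config L => valley h s && (s != minus1 L)) / mu h beta (pred1 (minus1 L))
  <= P * INR (2 ^ (M * M)) * (4 * (P * P)) * X.
Proof.
move=> hh b0 HL M P X small.
have h0 : 0 < h by case: hh.
have ML : (M < L)%N by rewrite /M; lia.
set y := INR L * (P * exp (- beta)).
have y0 : 0 <= y.
  by apply: Rmult_le_pos; [apply: pos_INR | apply: Rmult_le_pos; [apply: pos_INR | apply: Rlt_le; apply: exp_pos]].
have yX : (2 * y) * (2 * y) = 4 * (P * P) * X.
  have e2 : exp (-2 * beta) = exp (- beta) * exp (- beta) by rewrite -exp_plus; congr exp; ring.
  by rewrite /X /y mult_INR e2; ring.
have y1 : 2 * y <= 1 by nra.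
rewrite mu_ratio_minus1.
apply: (Rle_trans _ _ _ (Rsum_subpred _ _)); [exact: valley_small | by move=> s; apply/Rlt_le/exp_pos |].
apply: Rle_trans (sum_small_configs_le h0 (h_n0_le2 h0) (n0_pos hh) b0 ML y1) _.
by right; rewrite yX /P /M; ring.
Qed.

Lemma valley_ratio_eventually (h : R) (L : R -> nat) :
  0 < h < 1 ->
  (forall beta : R, 0 < beta -> (n0 h * (n0 h).+1 + 2 <= L beta)%N) ->
  (forall eps : R, 0 < eps -> exists B : R, forall beta : R, B <= beta ->
       Rabs (INR (L beta * L beta)%N * exp (-2 * beta)) < eps) ->
  exists K B : R, 0 <= K /\ forall beta : R, 0 < beta -> B <= beta ->
    0 <= mu h beta (fun s : config (L beta) => valley h s && (s != minus1 (L beta)))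
           / mu h beta (pred1 (minus1 (L beta)))
       <= K * (INR (L beta * L beta)%N * exp (-2 * beta)).
Proof.
move=> hh HL Hlim.
set M := (n0 h * n0 h + n0 h + 1)%N; set P := INR (2 ^ M).
have P1 : 1 <= P by rewrite /P -INR_1; apply: le_INR; apply/leP; rewrite expn_gt0.
have [B HB] := Hlim (/ (4 * (P * P))) ltac:(apply: Rinv_0_lt_compat; nra).
exists (P * INR (2 ^ (M * M)) * (4 * (P * P))), B; split.
  by apply: Rmult_le_pos; [apply: Rmult_le_pos; [lra | apply: pos_INR] | nra].
move=> beta b0 hb; split.
  by rewrite mu_ratio_minus1; apply: Rsum_ge0 => s _; apply/Rlt_le/exp_pos.
apply: valley_ratio_le => //; first exact: HL.
have X0 : 0 <= INR (L beta * L beta) * exp (-2 * beta).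
  by apply: Rmult_le_pos; [apply: pos_INR | apply/Rlt_le/exp_pos].
have := HB beta hb; rewrite Rabs_right; last exact: Rle_ge.
move=> /(Rmult_lt_compat_l (4 * (P * P)) _ _ ltac:(nra)).
rewrite Rinv_r; last by nra.
by rewrite -/M -/P => /Rlt_le.
Qed.

Theorem lemma8p2 (h : R) (L : R -> nat) :
  0 < h < 1 ->
  (forall z : Z, 2 / h <> IZR z) ->
  (forall beta : R, 0 < beta -> (n0 h * (n0 h).+1 + 2 <= L beta)%N) ->
  (forall eps : R, 0 < eps -> exists B : R, forall beta : R, B <= beta ->
       Rabs (INR (L beta * L beta)%N * exp (-2 * beta)) < eps) ->
  (exists C0 : R, forall beta : R, 0 < beta -> C0 <= beta ->
     mu h beta (fun s : config (L beta) => valley h s && (s != minus1 (L beta)))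
       / mu h beta (pred1 (minus1 (L beta)))
     <= C0 * INR (L beta * L beta)%N * exp (-2 * beta))
  /\
  (forall eps : R, 0 < eps -> exists B : R, forall beta : R, 0 < beta -> B <= beta ->
     Rabs (mu h beta (fun s : config (L beta) => valley h s && (s != minus1 (L beta)))
             / mu h beta (pred1 (minus1 (L beta)))) < eps).
Proof.
move=> hh _ HL Hlim.
have [K [B [K0 bound]]] := valley_ratio_eventually hh HL Hlim.
have X0 beta : 0 <= INR (L beta * L beta) * exp (-2 * beta).
  by apply: Rmult_le_pos; [apply: pos_INR | apply/Rlt_le/exp_pos].
split.
  exists (Rmax B K) => beta b0 hb.
  have [_ le] := bound beta b0 (Rle_trans _ _ _ (Rmax_l _ _) hb).
  rewrite Rmult_assoc; apply: (Rle_trans _ _ _ le).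
  by apply: Rmult_le_compat_r; [apply: X0 | exact: Rmax_r].
move=> eps ep.
have [B1 HB1] := Hlim (eps / (K + 1)) ltac:(apply: Rdiv_lt_0_compat; lra).
exists (Rmax B B1) => beta b0 hb.
have [r0 le] := bound beta b0 (Rle_trans _ _ _ (Rmax_l _ _) hb).
have := HB1 beta (Rle_trans _ _ _ (Rmax_r _ _) hb).
rewrite (Rabs_right _ (Rle_ge _ _ r0)) (Rabs_right _ (Rle_ge _ _ (X0 beta))).
move: (INR _ * _) (X0 beta) le => x x0 le small.
have -> : eps = (K + 1) * (eps / (K + 1)) by field; lra.
by apply: (Rle_lt_trans _ ((K + 1) * x)); [nra | apply: Rmult_lt_compat_l; lra].
Qed.
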